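(* Let $\mathcal{T}=(\mathcal{E},\mathcal{A})$ be a finite directed tree with root environment $0\in\mathcal{E}$, where $\mathcal{A}\subset\mathcal{E}^2$ is the set of arcs. Let $k\ge 1$. Suppose we are given a root weight vector $w_0\in\mathbb{R}^k$ and, for each arc $a=(e_m,e_n)\in\mathcal{A}$, a vector $\delta_a\in\mathbb{R}^k$, and define for every $e\in\mathcal{E}$ $$w_e := w_0+\sum_{a\in \mathrm{path}(0,e)}\delta_a,$$ where $\mathrm{path}(0,e)$ is the set of arcs on the directed path from $0$ to $e$ (so that $\delta_a=w_{e_n}-w_{e_m}$ for each arc $a=(e_m,e_n)$). Let $\Psi:\mathcal{X}\to\mathbb{R}^k$, where $\mathcal{X}\subseteq\mathbb{R}^d$. Assume: (i) for each environment $e\in\mathcal{E}$, pairs $(\mathbf{X},Y)$ are drawn i.i.d. from a distribution satisfying $\mathbb{E}[Y\mid \mathbf{X},e]=w_e^\top\Psi(\mathbf{X})$, and the support of $p(x\mid e)$ is the same set $\mathcal{X}$ for all $e$; (ii) there exist environments $e_1,\dots,e_k\in\mathcal{E}$ such that the matrix $[w_{e_1},\dots,w_{e_k}]$ is invertible; (iii) there exist $x^1,\dots,x^k\in\mathcal{X}$ such that the matrix $[\Psi(x^1),\dots,\Psi(x^k)]$ is invertible. Now let $\hat w_0\in\mathbb{R}^k$, $\hat\delta_a\in\mathbb{R}^k$ for $a\in\mathcal{A}$, and $\hat\Psi:\mathcal{X}\to\mathbb{R}^k$ be arbitrary, and define $\hat w_e:=\hat w_0+\sum_{a\in\mathrm{path}(0,e)}\hat\delta_a$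 for all $e\in\mathcal{E}$. If $\mathbb{E}[Y\mid \mathbf{X}=x,e]=\hat w_e^\top\hat\Psi(x)$ for all $x\in\mathcal{X}$ and all $e\in\mathcal{E}$, then there exists an invertible matrix $\mathbf{L}\in\mathbb{R}^{k\times k}$ such that: 1. $\Psi(x)=\mathbf{L}\hat\Psi(x)$ for all $x\in\mathcal{X}$; 2. $w_e^\top\mathbf{L}=\hat w_e^\top$ for all $e\in\mathcal{E}$; 3. $\delta_a^\top\mathbf{L}=\hat\delta_a^\top$ for all $a\in\mathcal{A}$.
   Context: Environments are the nodes of the tree; the model is $\mathbf{Z}=\Psi(\mathbf{X})+\eta$, $Y^e=w_e^\top\mathbf{Z}^e+\epsilon$, with latent dimension $k$. The learned quantities $\hat w_0,\hat\delta_a,\hat\Psi$ have the same dimension $k$ as the true ones. *)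

From HB Require Import structures.
From mathcomp Require Import all_boot all_order all_algebra.
From mathcomp Require Import reals.
Set Implicit Arguments. Unset Strict Implicit. Unset Printing Implicit Defensive.
Import Order.TTheory GRing.Theory Num.Theory.
Local Open Scope ring_scope.

(* A finite directed tree rooted at [r], with environments in the finType [E],
   encoded by its parent map [par]: every non-root node e has the unique
   incoming arc (par e, e); the root is fixed by [par] and every node reaches
   the root by iterating [par] (connectivity + acyclicity). *)
Definition is_rooted_tree (E : finType) (par : E -> E) (r : E) : Prop :=
  par r = r /\ forall e : E, exists n : nat, iter n par e = r.

Definition ancestors (E : finType) (par : E -> E) (e : E) : {set E} :=
  [set x | [exists i : 'I_#|E|.+1, iter i par e == x]].

Definition tree_arcs (E : finType) (par : E -> E) (r : E) : {set E * E} :=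
  [set (par x, x) | x in [set y : E | y != r]].

Definition path_arcs (E : finType) (par : E -> E) (r : E) (e : E) : {set E * E} :=
  [set (par x, x) | x in [set y in ancestors par e | y != r]].

Definition env_weight (R : realType) (k : nat) (E : finType) (par : E -> E) (r : E)
  (w0 : 'cV[R]_k) (delta : E * E -> 'cV[R]_k) (e : E) : 'cV[R]_k :=
  w0 + \sum_(a in path_arcs par r e) delta a.

Definition dotv (R : realType) (k : nat) (u v : 'cV[R]_k) : R :=
  (u^T *m v) ord0 ord0.

From HB Require Import structures.
From mathcomp Require Import all_boot all_order all_algebra.
From mathcomp Require Import reals classical_sets.
Import GRing.Theory.
Local Open Scope ring_scope.

(* Evaluating both factorisations at the k environments e_j and the k points
   x^j gives W^T P = What^T Phat with W and P invertible, so What and Phat are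
   invertible as well and L := W^-T What^T relates the two factorisations.
   On a tree delta_a is the difference of the weights at the two ends of a,
   so the relation for the arcs follows from the one for the environments. *)

Section ColumnMatrices.
Variables (R : pzRingType) (m n : nat).

Definition cols_mx (f : 'I_n -> 'cV[R]_m) : 'M[R]_(m, n) := \matrix_(i, j) f j i 0.

Lemma cols_mx_gram (f g : 'I_n -> 'cV[R]_m) :
  (cols_mx f)^T *m cols_mx g = \matrix_(i, j) ((f i)^T *m g j) 0 0.
Proof. by apply/matrixP => i j; rewrite !mxE; apply: eq_bigr => l _; rewrite !mxE. Qed.

Lemma tr_cols_mx_mul (f : 'I_n -> 'cV[R]_m) (v : 'cV[R]_m) :
  (cols_mx f)^T *m v = \col_i ((f i)^T *m v) 0 0.
Proof. by apply/matrixP => i j; rewrite !mxE ord1; apply: eq_bigr => l _; rewrite !mxE. Qed.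

Lemma mul_cols_mx (u : 'cV[R]_m) (g : 'I_n -> 'cV[R]_m) :
  u^T *m cols_mx g = \row_j (u^T *m g j) 0 0.
Proof. by apply/matrixP => i j; rewrite !mxE ord1; apply: eq_bigr => l _; rewrite !mxE. Qed.

End ColumnMatrices.
Arguments cols_mx {R m n} f.

Section BilinearIdentifiability.
Variables (R : comUnitRingType) (k : nat) (I X : Type) (S : X -> Prop).
Variables (u uh : I -> 'cV[R]_k) (v vh : X -> 'cV[R]_k).
Hypothesis huv : forall i x, S x -> (u i)^T *m v x = (uh i)^T *m vh x.
Variables (ps : 'I_k -> I) (xs : 'I_k -> X).
Hypothesis Sxs : forall j, S (xs j).

Let U := cols_mx (u \o ps).
Let Uh := cols_mx (uh \o ps).
Let V := cols_mx (v \o xs).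
Let Vh := cols_mx (vh \o xs).

Hypotheses (unitU : U \in unitmx) (unitV : V \in unitmx).

Let gram_eq : U^T *m V = Uh^T *m Vh.
Proof. by rewrite !cols_mx_gram; apply: eq_mx => i j /=; rewrite huv. Qed.

Let unit_hat_gram : Uh^T *m Vh \in unitmx.
Proof. by rewrite -gram_eq unitmx_mul unitmx_tr unitU unitV. Qed.

Lemma bilinear_identifiable : exists L : 'M[R]_k, L \in unitmx /\
  (forall x, S x -> v x = L *m vh x) /\ (forall i, (u i)^T *m L = (uh i)^T).
Proof.
have [unitUhT unitVh] : Uh^T \in unitmx /\ Vh \in unitmx.
  by apply/andP; rewrite -unitmx_mul unit_hat_gram.
have unitUT : U^T \in unitmx by rewrite unitmx_tr.
exists (invmx U^T *m Uh^T); split; last split.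
- by rewrite unitmx_mul unitmx_inv unitUT unitUhT.
- move=> x Sx; have UvE : U^T *m v x = Uh^T *m vh x.
    by rewrite !tr_cols_mx_mul; apply: eq_mx => i _ /=; rewrite huv.
  by rewrite -mulmxA -UvE mulKmx.
- move=> i; apply: (can_inj (mulmxK unitVh)) => /=.
  rewrite -!mulmxA -gram_eq mulKmx // !mul_cols_mx.
  by apply: eq_mx => _ j /=; rewrite huv.
Qed.

End BilinearIdentifiability.
Arguments bilinear_identifiable {R k I X S u uh v vh} huv {ps xs}.

Section RootedTree.
Variables (E : finType) (par : E -> E) (r : E).
Hypothesis htree : is_rooted_tree par r.

Lemma iter_par_root n : iter n par r = r.
Proof. by case: htree => parr _; elim: n => //= n ->. Qed.

Lemma iter_par_card e : iter #|E| par e = r.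
Proof.
case: htree => _ /(_ e) [n reach].
have er : fconnect par e r by rewrite -reach; apply: fconnect_iter.
have orderE : (order par e <= #|E|)%N.
  by rewrite -size_orbit -(card_uniqP (orbit_uniq par e)) max_card.
have -> : #|E| = ((#|E| - findex par e r) + findex par e r)%N.
  by rewrite subnK // ltnW // (leq_trans (findex_max er) orderE).
by rewrite iterD iter_findex // iter_par_root.
Qed.

Lemma ancestorsP e x : reflect (exists n, iter n par e = x) (x \in ancestors par e).
Proof.
rewrite inE; apply: (iffP existsP) => [[i /eqP <-]|[n <-]]; first by exists i.
case: (leqP n #|E|) => [small|large]; first by exists (Ordinal (small : n < #|E|.+1)%N).
exists ord_max; apply/eqP => /=; rewrite iter_par_card.
by rewrite -(subnK (ltnW large)) iterD iter_par_card iter_par_root.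
Qed.

Lemma ancestors_par x : ancestors par x = x |: ancestors par (par x).
Proof.
apply/setP => y; apply/ancestorsP/setU1P.
  case=> [[|n]] /= <-; first by left.
  by right; apply/ancestorsP; exists n; rewrite -iterSr.
case=> [->|/ancestorsP [n <-]]; first by exists 0%N.
by exists n.+1; rewrite iterSr.
Qed.

(* A cycle through x would keep x away from the root forever. *)
Lemma notin_ancestors_par x : x != r -> x \notin ancestors par (par x).
Proof.
move=> xr; apply/negP => /ancestorsP [n cycle].
have periodic q : iter (q * n.+1) par x = x.
  by elim: q => // q IH; rewrite mulSn iterD IH iterSr cycle.
have := periodic #|E|; rewrite mulnS addnC iterD iter_par_card iter_par_root.
by move=> rx; rewrite rx eqxx in xr.
Qed.

Lemma path_arcs_par x : x != r ->
  path_arcs par r x = (par x, x) |: path_arcs par r (par x).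
Proof.
move=> xr; rewrite /path_arcs -imsetU1.
suff -> : [set y in ancestors par x | y != r] =
          x |: [set y in ancestors par (par x) | y != r] by [].
apply/setP => y; rewrite [in LHS]inE ancestors_par !inE.
by case: eqP => // ->; rewrite xr.
Qed.

Lemma arc_notin_path_arcs_par x : x != r -> (par x, x) \notin path_arcs par r (par x).
Proof.
move=> xr; apply/imsetP => [[y]]; rewrite inE => /andP[anc _] [_ xy].
by move: anc; rewrite -xy (negbTE (notin_ancestors_par x xr)).
Qed.

Variables (R : realType) (k : nat).
Variables (w0 : 'cV[R]_k) (delta : E * E -> 'cV[R]_k).

Lemma env_weight_par x : x != r ->
  env_weight par r w0 delta x = env_weight par r w0 delta (par x) + delta (par x, x).
Proof.
move=> xr; rewrite /env_weight path_arcs_par // big_setU1 ?arc_notin_path_arcs_par //.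
by rewrite addrCA addrC.
Qed.

Lemma tree_arc_delta a : a \in tree_arcs par r ->
  delta a = env_weight par r w0 delta a.2 - env_weight par r w0 delta a.1.
Proof. by move=> /imsetP[x]; rewrite inE => xr ->; rewrite env_weight_par // addrC addKr. Qed.

End RootedTree.
Arguments tree_arc_delta {E par r} htree {R k} w0 delta {a}.

Theorem proposition4p4 (R : realType) (d k : nat) (hk : (0 < k)%N)
  (E : finType) (par : E -> E) (r : E) (htree : is_rooted_tree par r)
  (Xs : set 'cV[R]_d)                  (* common support X of p(x | e) *)
  (m : E -> 'cV[R]_d -> R)             (* m e x = E[Y | X = x, e] *)
  (w0 : 'cV[R]_k) (delta : E * E -> 'cV[R]_k) (Psi : 'cV[R]_d -> 'cV[R]_k)
  (hmodel : forall e x, Xs x -> m e x = dotv (env_weight par r w0 delta e) (Psi x))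
  (hw : exists es : 'I_k -> E,
      (\matrix_(i < k, j < k) env_weight par r w0 delta (es j) i 0) \in unitmx)
  (hPsi : exists xs : 'I_k -> 'cV[R]_d, (forall j, Xs (xs j)) /\
      (\matrix_(i < k, j < k) Psi (xs j) i 0) \in unitmx)
  (w0h : 'cV[R]_k) (deltah : E * E -> 'cV[R]_k) (Psih : 'cV[R]_d -> 'cV[R]_k)
  (hfit : forall e x, Xs x -> m e x = dotv (env_weight par r w0h deltah e) (Psih x)) :
  exists L : 'M[R]_k, L \in unitmx /\
    (forall x, Xs x -> Psi x = L *m Psih x) /\
    (forall e, (env_weight par r w0 delta e)^T *m L = (env_weight par r w0h deltah e)^T) /\
    (forall a, a \in tree_arcs par r -> (delta a)^T *m L = (deltah a)^T).
Proof.
move: hw hPsi => [es unitW] [xs [Xxs unitP]].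
set w := env_weight par r w0 delta; set wh := env_weight par r w0h deltah.
have fits e x : Xs x -> (w e)^T *m Psi x = (wh e)^T *m Psih x.
  by move=> Xx; apply/matrixP => i j; rewrite !ord1 -[LHS]/(dotv _ _) -hmodel // hfit.
have [L [unitL [PsiL wL]]] := bilinear_identifiable fits Xxs unitW unitP.
exists L; split=> //; split=> //; split=> // a arc.
rewrite (tree_arc_delta htree w0 delta arc) (tree_arc_delta htree w0h deltah arc).
by rewrite !linearB !mulmxBl !wL.
Qed.
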